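(* Let $(P,\le,A_1\ldots A_k)$ be a regular poset of width $w$ with node tree $(\mathcal{N},\prec)$, and let $\mathcal{F}\subseteq\mathcal{N}$ be ancestor-free. Then the edge poset $(\mathcal{F}_E,\le_E)$ has width at most $w^3$.
   Context: Let $(P,\le)$ be a finite poset of width $w$. For $A\subseteq P$ let $A{\uparrow}=\{y: x\le y\text{ for some }x\in A\}$, $A{\downarrow}=\{y: y\le x\text{ for some }x\in A\}$. For maximal antichains $A,B$ write $A\sqsubseteq B$ if $A\subseteq B{\downarrow}$, and $A\sqsubset B$ if also $A\ne B$. For disjoint antichains $A\sqsubset B$, $(A,B,<)$ is the bipartite graph with classes $A,B$ and edges $(a<b)$ for $a\in A,b\in B$, $a<b$; it is regular if every edge lies in a perfect matching. A regular poset $(P,\le,A_1\ldots A_k)$: $A_1,\dots,A_k$ are maximum antichains partitioning $P$, $(\{A_1,\dots,A_k\},\sqsubseteq)$ is a linear order with minimum $A_1$ and maximum $A_2$, $a<b$ for all $a\in A_1,b\in A_2$, and for every $t\in[2,k]$ and every $A_p\sqsubset A_s$ consecutive in $(\{A_1,\dots,A_t\},\sqsubseteq)$ the graph $(A_p,A_s,<)$ is regular. A node is a bipartite graph $(X,Y,<)$ where, for some such consecutive pair $A_p\sqsubset A_s$ (at some stage $t$), $X\subseteq A_p$, $Y\subseteq A_s$ and $X\cup Y$ is the vertex set of a connected component of $(A_p,A_s,<)$; $\mathrm{Int}(X,Y,<)=X{\uparrow}\cap Y{\downarrow}$. Node tree $(\mathcal{N},\prec)$: $\mathcal{N}$ is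 the set of all nodes; when for $t\ge3$ the antichain $A_t$ is inserted between $A_p\sqsubset A_s$ consecutive at stage $t-1$, each node $M$ of $(A_p,A_t,<)$ or $(A_t,A_s,<)$ is a child of the unique node $N$ of $(A_p,A_s,<)$ with $\mathrm{Int}(M)\subset\mathrm{Int}(N)$; this is a rooted tree with root $(A_1,A_2,<)$. A set $\mathcal{F}\subseteq\mathcal{N}$ is ancestor-free if no node of $\mathcal{F}$ is a descendant of another node of $\mathcal{F}$. For $\mathcal{F}\subseteq\mathcal{N}$, $\mathcal{F}_E$ is the set of all edges $(a<b)$ of nodes in $\mathcal{F}$, and the edge poset $(\mathcal{F}_E,\le_E)$ is the partial order in which for distinct edges $(a<b)<_E(c<d)$ iff $b\le c$. *)

From mathcomp Require Import all_boot all_order.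
Set Implicit Arguments. Unset Strict Implicit. Unset Printing Implicit Defensive.
Import Order.Theory.
Local Open Scope order_scope.

Section RegularPosets.
Context {d : Order.disp_t} {T : finPOrderType d}.

Definition antichain (B : {set T}) : bool :=
  [forall x in B, forall y in B, (x <= y) ==> (x == y)].

Definition width : nat := \max_(B : {set T} | antichain B) #|B|.

Definition maximum_antichain (B : {set T}) : bool :=
  antichain B && (#|B| == width).

Definition up (B : {set T}) : {set T} := [set y | [exists x in B, x <= y]].
Definition down (B : {set T}) : {set T} := [set y | [exists x in B, y <= x]].

Definition sqle (A B : {set T}) : bool := A \subset down B.
Definition sqlt (A B : {set T}) : bool := sqle A B && (A != B).

Definition perfect_matching (X Y : {set T}) (M : {set T * T}) : bool :=
  [forall e in M, [&& e.1 \in X, e.2 \in Y & e.1 < e.2]] &&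
  [forall a in X, #|[set e in M | e.1 == a]| == 1%N] &&
  [forall b in Y, #|[set e in M | e.2 == b]| == 1%N].

Definition regular_bip (X Y : {set T}) : Prop :=
  forall a b, a \in X -> b \in Y -> a < b ->
    exists M : {set T * T}, perfect_matching X Y M && ((a, b) \in M).

Definition bip_adj (Ap As : {set T}) : rel T :=
  fun x y => [&& x \in Ap, y \in As & x < y] || [&& y \in Ap, x \in As & y < x].

Definition component_of (Ap As X Y : {set T}) : Prop :=
  X \subset Ap /\ Y \subset As /\
  exists2 v, v \in Ap :|: As & X :|: Y = [set u | connect (bip_adj Ap As) v u].

(** The regular poset data: A is indexed by 1..k. *)
Variable (A : nat -> {set T}) (k : nat).

Definition consecutive (t p s : nat) : Prop :=
  [/\ (1 <= p <= t)%N, (1 <= s <= t)%N, sqlt (A p) (A s) &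
      forall q, (1 <= q <= t)%N -> ~ (sqlt (A p) (A q) && sqlt (A q) (A s))].

Definition regular_poset : Prop :=
  (2 <= k)%N /\
  (forall i, (1 <= i <= k)%N -> maximum_antichain (A i)) /\
  (forall x : T, exists2 i, (1 <= i <= k)%N & x \in A i) /\
  (forall i j, (1 <= i <= k)%N -> (1 <= j <= k)%N -> i != j ->
      [disjoint A i & A j]) /\
  (forall i j, (1 <= i <= k)%N -> (1 <= j <= k)%N ->
      sqle (A i) (A j) || sqle (A j) (A i)) /\
  (forall i, (1 <= i <= k)%N -> sqle (A 1) (A i) && sqle (A i) (A 2)) /\
  (forall a b, a \in A 1 -> b \in A 2 -> a < b) /\
  (forall t p s, (2 <= t <= k)%N -> consecutive t p s ->
      regular_bip (A p) (A s)).

(** Nodes: pairs (X, Y) standing for the bipartite graph (X, Y, <). *)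
Definition node := ({set T} * {set T})%type.

Definition is_node (N : node) : Prop :=
  exists t p s, [/\ (2 <= t <= k)%N, consecutive t p s &
                    component_of (A p) (A s) N.1 N.2].

Definition Int (N : node) : {set T} := up N.1 :&: down N.2.

Definition child (M N : node) : Prop :=
  exists t p s,
     [/\ (3 <= t <= k)%N, consecutive t.-1 p s &
         sqlt (A p) (A t) && sqlt (A t) (A s)] /\
     [/\ component_of (A p) (A t) M.1 M.2 \/ component_of (A t) (A s) M.1 M.2,
         component_of (A p) (A s) N.1 N.2 &
         Int M \proper Int N].

Inductive descendant : node -> node -> Prop :=
  | desc_child M N : child M N -> descendant M N
  | desc_step M N O : child M N -> descendant N O -> descendant M O.

Definition ancestor_free (F : {set node}) : Prop :=
  forall M N, M \in F -> N \in F -> ~ descendant M N.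

Definition edges_of (F : {set node}) : {set T * T} :=
  [set e | [exists N in F, [&& e.1 \in N.1, e.2 \in N.2 & e.1 < e.2]]].

(** Antichains of the edge poset (F_E, <=_E): distinct e, f with e <_E f iff e.2 <= f.1. *)
Definition edge_antichain (F : {set node}) (S : {set T * T}) : Prop :=
  S \subset edges_of F /\
  forall e f, e \in S -> f \in S -> e != f -> ~~ (e.2 <= f.1).

End RegularPosets.

(* Every edge (a < b) of F_E lies in a node of a consecutive pair (A_p, A_s), with a in A_p
   and b in A_s.  If the ⊑-interval [A_p', A_s'] of a node M is nested in the interval
   [A_p, A_s] of a node N, and some element of N's lower class lies below some element of
   M's upper class, then climbing the node tree from M reaches N; in an ancestor-free family
   such M and N therefore coincide.  Hence the edges of an antichain S of F_E sharing a lower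
   end all end in one level, so there are at most w of them.  Along a chain c_1 < ... < c_m
   of lower ends, the perfect matchings of the regular graphs and a Hall-type inequality for
   maximum antichains show that the up-set of the upper ends of edges at c_1, ..., c_(m-1)
   meets the level of c_m in at least m - 1 elements, none equal to c_m; so m <= w.  By
   Mirsky's theorem there are at most w^2 lower ends, and |S| <= w^3. *)

From mathcomp Require Import all_boot all_order.
Set Implicit Arguments. Unset Strict Implicit. Unset Printing Implicit Defensive.
Import Order.Theory.

Lemma leq_card_fibers (T U : finType) (f : T -> U) (X : {set T}) m :
  (forall u, #|[set x in X | f x == u]| <= m) -> #|X| <= #|f @: X| * m.
Proof.
move=> fib; rewrite -sum1_card (partition_big_imset f) /= -sum_nat_const.
apply: leq_sum => u _; rewrite sum1_card.
by apply: leq_trans (fib u); apply: subset_leq_card; apply/subsetP => x; rewrite !inE.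
Qed.

Lemma ex_arg_minn n (P : pred nat) (f : nat -> nat) : (exists2 i, i < n & P i) ->
  exists q, [/\ q < n, P q & forall i, i < n -> P i -> f q <= f i].
Proof.
case=> i0 i0n Pi0.
have [q Pq qmin] := @arg_minnP _ (Ordinal i0n) (fun i : 'I_n => P i) (fun i => f i) Pi0.
by exists q; split => // i lt_in /(qmin (Ordinal lt_in)).
Qed.

Lemma ex_arg_maxn n (P : pred nat) (f : nat -> nat) : (exists2 i, i < n & P i) ->
  exists q, [/\ q < n, P q & forall i, i < n -> P i -> f i <= f q].
Proof.
case=> i0 i0n Pi0.
have [q Pq qmax] := @arg_maxnP _ (Ordinal i0n) (fun i : 'I_n => P i) (fun i => f i) Pi0.
by exists q; split => // i lt_in /(qmax (Ordinal lt_in)).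
Qed.

Section Antichains.
Variables (d : Order.disp_t) (T : finPOrderType d).
Implicit Types (B C X Y Z : {set T}).
Local Notation w := (@width d T).

Lemma antichainP B : reflect {in B &, forall x y, (x <= y)%O -> x = y} (antichain B).
Proof.
apply: (iffP forall_inP) => [anti x y xB yB le | anti x xB].
  by move/forall_inP/(_ y yB)/implyP/(_ le)/eqP: (anti x xB).
by apply/forall_inP => y yB; apply/implyP => /(anti x y xB yB)/eqP.
Qed.

Lemma antichainS B B' : B' \subset B -> antichain B -> antichain B'.
Proof.
move=> sB /antichainP anti; apply/antichainP => x y /(subsetP sB) xB /(subsetP sB).
exact: anti.
Qed.

Lemma antichain_leq_width B : antichain B -> #|B| <= w.
Proof. by move=> aB; apply: (leq_bigmax_cond (F := fun B : {set T} => #|B|)). Qed.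

Lemma width_gt0 (x : T) : 0 < w.
Proof.
apply: leq_trans (antichain_leq_width (B := [set x]) _); first by rewrite cards1.
by apply/antichainP => ? ? /set1P -> /set1P ->.
Qed.

Lemma upP X y : reflect (exists2 x, x \in X & (x <= y)%O) (y \in up X).
Proof. by rewrite inE; apply: exists_inP. Qed.

Lemma downP Y x : reflect (exists2 y, y \in Y & (x <= y)%O) (x \in down Y).
Proof. by rewrite inE; apply: exists_inP. Qed.

Lemma sub_down X : X \subset down X.
Proof. by apply/subsetP => x xX; apply/downP; exists x. Qed.

Lemma up_subset X Y : X \subset Y -> up X \subset up Y.
Proof.
move=> sXY; apply/subsetP => z /upP [x xX xz].
by apply/upP; exists x; rewrite ?(subsetP sXY).
Qed.

Lemma up_up X : up (up X) = up X.
Proof.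
apply/eqP; rewrite eqEsubset; apply/andP; split; apply/subsetP => z /upP [y].
  by move=> /upP [x xX xy] yz; apply/upP; exists x; rewrite ?(le_trans xy yz).
by move=> yX yz; apply/upP; exists y => //; apply/upP; exists y.
Qed.

Lemma sqleP X Y : reflect {in X, forall x, exists2 y, y \in Y & (x <= y)%O} (sqle X Y).
Proof. by apply: (iffP subsetP) => sXY x /sXY => [/downP|]; last move/downP. Qed.

Lemma sqle_down X Y : sqle X Y -> down X \subset down Y.
Proof.
move/sqleP => XY; apply/subsetP => z /downP [x /XY [y yY xy] zx].
by apply/downP; exists y; last exact: le_trans zx xy.
Qed.

Lemma sqle_antisym X Y : antichain X -> antichain Y -> sqle X Y -> sqle Y X -> X = Y.
Proof.
suff sub Z Z' : antichain Z -> sqle Z Z' -> sqle Z' Z -> Z \subset Z'.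
  by move=> antiX antiY XY YX; apply/eqP; rewrite eqEsubset !sub.
move=> antiZ /sqleP ZZ' /sqleP Z'Z; apply/subsetP => z zZ.
have [y yZ' zy] := ZZ' z zZ; have [z' z'Z yz'] := Z'Z y yZ'.
have zz' : z = z' by apply: (antichainP _ antiZ) => //; exact: le_trans zy yz'.
by subst z'; rewrite (@le_anti _ _ z y) ?zy.
Qed.

Lemma maximum_sqle_sub_up X Y :
  maximum_antichain X -> antichain Y -> sqle X Y -> Y \subset up X.
Proof.
move=> /andP [antiX /eqP cardX] antiY /sqleP XY; apply/subsetP => y yY; apply: contraT => yX.
have below_y x : x \in X -> (x <= y)%O -> False by move=> xX xy; case/upP: yX; exists x.
have yNX : y \notin X by apply/negP => /below_y; apply; rewrite lexx.
suff /antichain_leq_width : antichain (y |: X) by rewrite cardsU1 yNX cardX ltnn.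
apply/antichainP => a b; rewrite !inE => /predU1P [->|aX'] /predU1P [->|bX'] // ab.
- have [y' y'Y by'] := XY b bX'.
  have yy' : y = y' by apply: (antichainP _ antiY) => //; exact: le_trans ab by'.
  by subst y'; case: (below_y b bX'); rewrite by'.
- by case: (below_y a aX').
- exact: (antichainP _ antiX).
Qed.

Lemma leq_card_up_maximum X Y Z : antichain X -> maximum_antichain Y -> sqle X Y ->
  Z \subset X -> #|Z| <= #|up Z :&: Y|.
Proof.
move=> antiX /andP [antiY /eqP cardY] /sqleP XY sZX.
have antiYZ : antichain ((Y :\: up Z) :|: Z).
  apply/antichainP => a b; rewrite !inE.
  move=> /orP [/andP [_ aY]|aZ] /orP [/andP [bNup bY]|bZ] ab.
  - exact: (antichainP _ antiY).
  - have [y yY by_] := XY b (subsetP sZX _ bZ).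
    have ay : a = y by apply: (antichainP _ antiY) => //; exact: le_trans ab by_.
    by subst y; apply: le_anti; rewrite ab by_.
  - by case/negP: bNup; apply/exists_inP; exists a.
  - by apply: (antichainP _ antiX) => //; apply: (subsetP sZX).
have := antichain_leq_width antiYZ; rewrite cardsU.
have -> : (Y :\: up Z) :&: Z = set0.
  apply/setP => z; rewrite !inE; case zZ: (z \in Z); rewrite ?andbF //=.
  by rewrite (_ : [exists x in Z, _]) //; apply/exists_inP; exists z.
by rewrite cards0 subn0 -cardY -(cardsID (up Z) Y) setIC [X in _ <= X]addnC leq_add2l.
Qed.

Definition chain C : bool := [forall x in C, forall y in C, (x <= y)%O || (y <= x)%O].

Lemma chainP C : reflect {in C &, forall x y, (x <= y)%O || (y <= x)%O} (chain C).
Proof.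
apply: (iffP forall_inP) => [ch x y xC yC | ch x xC].
  by move/forall_inP/(_ y yC): (ch x xC).
by apply/forall_inP => y yC; apply: ch.
Qed.

Lemma chainS C C' : C' \subset C -> chain C -> chain C'.
Proof. by move=> sC /chainP ch; apply/chainP => x y /(subsetP sC) xC /(subsetP sC); apply: ch. Qed.

Lemma chain_max C : chain C -> C != set0 -> exists2 c, c \in C & {in C, forall x, (x <= c)%O}.
Proof.
move=> /chainP ch /set0Pn [x0 x0C].
have [c cC cmax] := @arg_maxnP _ x0 (mem C) (fun x => #|[set y | (y <= x)%O]|) x0C.
exists c => // x xC; case/orP: (ch _ _ xC cC) => // cx.
have [-> //|xc] := eqVneq x c.
suff /proper_card : [set y | (y <= c)%O] \proper [set y | (y <= x)%O].
  by move: (cmax x xC); rewrite /= leqNgt => /negP.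
apply/properP; split; first by apply/subsetP => y; rewrite !inE => /le_trans; apply.
by exists x; rewrite !inE ?lexx // lt_geF // lt_neqAle cx eq_sym xc.
Qed.

Lemma chain1 x : chain [set x].
Proof. by apply/chainP => ? ? /set1P -> /set1P ->; rewrite lexx. Qed.

(* Mirsky: the maximal elements form an antichain, and a chain avoiding them extends upward. *)
Lemma leq_card_chain_width X h :
  (forall C, C \subset X -> chain C -> #|C| <= h) -> #|X| <= h * w.
Proof.
elim: h X => [|h IH] X chX.
  suff -> : X = set0 by rewrite cards0.
  apply/setP => x; rewrite inE; apply/negP => xX.
  by have := chX [set x]; rewrite sub1set xX cards1 => /(_ isT (chain1 x)).
pose Xmax := [set x in X | [forall y in X, ~~ (x < y)%O]].
have aXmax : antichain Xmax.
  apply/antichainP => a b; rewrite !inE => /andP [_ /forall_inP amax] /andP [bX _] ab.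
  by apply/eqP; apply: contraT => nab; move: (amax b bX); rewrite lt_neqAle nab ab.
rewrite mulSn -(cardsID Xmax X) leq_add //.
  exact: leq_trans (subset_leq_card (subsetIr _ _)) (antichain_leq_width aXmax).
apply: IH => C sC chC; have [->|nC] := eqVneq C set0; first by rewrite cards0.
have [c cC cmax] := chain_max chC nC.
have /setDP [cX cNmax] := subsetP sC c cC.
have [y yX cy] : exists2 y, y \in X & (c < y)%O.
  by move: cNmax; rewrite inE cX negb_forall_in => /exists_inP [y yX /negPn]; exists y.
have yNC : y \notin C by apply/negP => /cmax; rewrite lt_geF.
have := chX (y |: C); rewrite cardsU1 yNC add1n ltnS; apply.
  by rewrite subUset sub1set yX (subset_trans sC) ?subsetDl.
apply/chainP => a b; rewrite !inE => /predU1P [->|aC] /predU1P [->|bC].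
- by rewrite lexx.
- by rewrite (le_trans (cmax b bC) (ltW cy)) orbT.
- by rewrite (le_trans (cmax a aC) (ltW cy)).
- exact: (chainP _ chC).
Qed.

End Antichains.

Section Matchings.
Variables (d : Order.disp_t) (T : finPOrderType d).
Variables (X Y : {set T}) (M : {set T * T}).
Hypothesis pmM : perfect_matching X Y M.

Lemma perfect_matching_edge e : e \in M -> [/\ e.1 \in X, e.2 \in Y & (e.1 < e.2)%O].
Proof. by case/andP: pmM => /andP [/forall_inP edgeM _] _ /edgeM /and3P. Qed.

Lemma perfect_matching_cover x : x \in X -> exists2 y, y \in Y & (x, y) \in M.
Proof.
case/andP: pmM => /andP [_ /forall_inP coverX] _ /coverX /cards1P [e /setP /(_ e)].
rewrite !inE eqxx => /andP [eM /eqP <-]; have [_ eY _] := perfect_matching_edge eM.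
by exists e.2; rewrite // -surjective_pairing.
Qed.

Lemma perfect_matching_fst_inj : {in M &, injective (fun e => e.1)}.
Proof.
move=> e f eM fM ef; have [eX _ _] := perfect_matching_edge eM.
case/andP: pmM => /andP [_ /forall_inP /(_ _ eX) /cards1P [g /setP gE]] _.
by move: (gE e) (gE f); rewrite !inE eM fM -ef eqxx /= => /esym/eqP -> /esym/eqP.
Qed.

Lemma perfect_matching_snd_inj : {in M &, injective (fun e => e.2)}.
Proof.
move=> e f eM fM ef; have [_ eY _] := perfect_matching_edge eM.
case/andP: pmM => _ /forall_inP /(_ _ eY) /cards1P [g /setP gE].
by move: (gE e) (gE f); rewrite !inE eM fM -ef eqxx /= => /esym/eqP -> /esym/eqP.
Qed.

Lemma perfect_matching_card_lt (Q Z : {set T}) c b :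
  Q \subset X -> (c, b) \in M -> c \notin Q -> b \in Z ->
  (forall q y, q \in Q -> y \in Y -> (q < y)%O -> y \in Z) -> #|Q| < #|Z|.
Proof.
move=> sQX cbM cNQ bZ QY_Z; have [cX _ _] := perfect_matching_edge cbM.
pose E := [set e in M | e.1 \in c |: Q].
have cQ_E : c |: Q \subset [set e.1 | e in E].
  apply/subsetP => x xcQ; have /(perfect_matching_cover) [y _ xyM] : x \in X.
    by case/setU1P: xcQ => [->|/(subsetP sQX)].
  by apply/imsetP; exists (x, y); rewrite // inE xyM.
have E_Z : [set e.2 | e in E] \subset Z.
  apply/subsetP => _ /imsetP [e /setIdP [eM /setU1P [ec|eQ]] ->].
    by rewrite (@perfect_matching_fst_inj e (c, b)).
  by have [_ eY lte] := perfect_matching_edge eM; apply: QY_Z eQ eY lte.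
have sEM : {subset E <= M} by move=> e /setIdP [].
have := cardsU1 c Q; rewrite cNQ add1n => <-.
apply: leq_trans (subset_leq_card cQ_E) _.
apply: leq_trans (leq_imset_card _ _) _.
rewrite -(card_in_imset (sub_in2 sEM perfect_matching_snd_inj)).
exact: subset_leq_card E_Z.
Qed.

End Matchings.

Section Components.
Variables (d : Order.disp_t) (T : finPOrderType d).
Implicit Types (P Q R X Y : {set T}).

Definition bip_component P Q v : {set T} := [set u | connect (bip_adj P Q) v u].

Lemma bip_adj_connect_sym P Q : connect_sym (bip_adj P Q).
Proof. by apply: sym_connect_sym => x y; rewrite /bip_adj orbC. Qed.

Lemma connect_bip_inv P Q (I : {pred T}) x y :
  (forall a b, bip_adj P Q a b -> a \in I -> b \in I) ->
  connect (bip_adj P Q) x y -> x \in I -> y \in I.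
Proof.
by move=> closedI xy; rewrite (closed_connect (intro_closed (bip_adj_connect_sym P Q) closedI) xy).
Qed.

Lemma bip_component_sub P Q v : v \in P :|: Q -> bip_component P Q v \subset P :|: Q.
Proof.
move=> vPQ; apply/subsetP => u; rewrite inE => /connect_bip_inv; apply=> // a b.
by case/orP => /and3P [aP bQ _]; rewrite !inE ?aP ?bQ ?orbT.
Qed.

Lemma bip_component_eq P Q u v :
  u \in bip_component P Q v -> bip_component P Q u = bip_component P Q v.
Proof.
rewrite inE => vu; apply/setP => z; rewrite !inE.
by rewrite (same_connect (bip_adj_connect_sym P Q) vu).
Qed.

Lemma component_of_bip_component P Q v : v \in P :|: Q ->
  component_of P Q (bip_component P Q v :&: P) (bip_component P Q v :&: Q).
Proof.
move=> vPQ; split; [exact: subsetIr | split; first exact: subsetIr].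
by exists v => //; rewrite -setIUr; apply/setIidPl/bip_component_sub.
Qed.

Section Component.
Variables (P Q X Y : {set T}).
Hypotheses (PQ : [disjoint P & Q]) (cXY : component_of P Q X Y).

Lemma componentE : exists2 v, v \in X :|: Y & X :|: Y = bip_component P Q v.
Proof. by case: cXY => _ [_ [v _ XYv]]; exists v; rewrite // XYv inE. Qed.

Lemma component_sub : X \subset P /\ Y \subset Q.
Proof. by case: cXY => sXP [sYQ _]. Qed.

Lemma component_split : X = (X :|: Y) :&: P /\ Y = (X :|: Y) :&: Q.
Proof.
have [sXP sYQ] := component_sub.
have YP0 : Y :&: P = set0.
  by apply/disjoint_setI0; apply: disjointWl sYQ _; rewrite disjoint_sym.
have XQ0 : X :&: Q = set0 by apply/disjoint_setI0; exact: disjointWl sXP PQ.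
by rewrite !setIUl YP0 XQ0 setU0 set0U; split; apply/esym/setIidPl.
Qed.

Lemma component_adj a b : a \in X :|: Y -> bip_adj P Q a b -> b \in X :|: Y.
Proof.
have [v _ ->] := componentE; rewrite !inE => va ab.
exact: connect_trans va (connect1 ab).
Qed.

Lemma component_up x y : x \in X -> y \in Q -> (x < y)%O -> y \in Y.
Proof.
move=> xX yQ xy; have [sXP _] := component_sub.
have : y \in X :|: Y.
  by apply: (@component_adj x); rewrite ?inE ?xX // /bip_adj (subsetP sXP x xX) yQ xy.
by rewrite inE => /orP [/(subsetP sXP) yP|//]; rewrite (disjointFr PQ yP) in yQ.
Qed.

Lemma component_down x y : y \in Y -> x \in P -> (x < y)%O -> x \in X.
Proof.
move=> yY xP xy; have [_ sYQ] := component_sub.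
have : x \in X :|: Y.
  by apply: (@component_adj y); rewrite ?inE ?yY ?orbT // /bip_adj (subsetP sYQ y yY) xP xy orbT.
by rewrite inE => /orP [//|/(subsetP sYQ) xQ]; rewrite (disjointFr PQ xP) in xQ.
Qed.

Lemma component_has_edge :
  {in P, forall x, exists2 y, y \in Q & (x < y)%O} ->
  {in Q, forall y, exists2 x, x \in P & (x < y)%O} ->
  exists x y, [/\ x \in X, y \in Y & (x < y)%O].
Proof.
move=> P_up Q_down; have [sXP sYQ] := component_sub.
have [v + _] := componentE; rewrite inE => /orP [vX|vY].
  have [y yQ vy] := P_up v (subsetP sXP v vX).
  by exists v, y; split => //; apply: component_up vX yQ vy.
have [x xP xv] := Q_down v (subsetP sYQ v vY).
by exists x, v; split => //; apply: component_down vY xP xv.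
Qed.

End Component.

Lemma component_eq P Q X Y X' Y' z : [disjoint P & Q] ->
  component_of P Q X Y -> component_of P Q X' Y' ->
  z \in X :|: Y -> z \in X' :|: Y' -> (X, Y) = (X', Y').
Proof.
move=> PQ cXY cXY' zXY zXY'.
have [v _ XYv] := componentE cXY; have [v' _ XYv'] := componentE cXY'.
have eXY : X :|: Y = X' :|: Y'.
  by rewrite XYv XYv' -(@bip_component_eq _ _ z v) -?XYv // -(@bip_component_eq _ _ z v') -?XYv'.
have [eX eY] := component_split PQ cXY; have [eX' eY'] := component_split PQ cXY'.
by congr pair; [rewrite eX eX' eXY | rewrite eY eY' eXY].
Qed.

Lemma component_lift_up P Q R X Y x0 :
  [disjoint P & Q] -> {in Q, forall q, exists2 r, r \in R & (q < r)%O} ->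
  component_of P Q X Y -> x0 \in X ->
  let C := bip_component P R x0 in
  X \subset C :&: P /\ {in Y, forall y, exists2 r, r \in C :&: R & (y < r)%O}.
Proof.
move=> PQ QR cXY x0X C; have [sXP sYQ] := component_sub cXY.
pose I := [pred u | if u \in P then u \in C else [exists r in C :&: R, (u < r)%O]].
have IXY u : u \in X :|: Y -> u \in I.
  have [v _ XYv] := componentE cXY.
  have x0v : x0 \in bip_component P Q v by rewrite -XYv inE x0X.
  rewrite XYv -(bip_component_eq x0v) [u \in _]inE => x0u.
  apply: (connect_bip_inv _ x0u); last by rewrite inE (subsetP sXP) // inE connect0.
  move=> a b /orP [/and3P [aP bQ ab]|/and3P [bP aQ ba]]; rewrite !inE.
  - rewrite aP (disjointFl PQ bQ) => x0a; have [r rR br] := QR b bQ.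
    apply/exists_inP; exists r => //; rewrite !inE rR andbT.
    by apply: connect_trans x0a (connect1 _); rewrite /bip_adj aP rR (lt_trans ab br).
  - rewrite bP (disjointFl PQ aQ) => /exists_inP [r /setIP [x0r rR] ar].
    move: x0r; rewrite inE => x0r; apply: connect_trans x0r (connect1 _).
    by rewrite /bip_adj bP rR (lt_trans ba ar) orbT.
split.
  apply/subsetP => x xX; have xP := subsetP sXP x xX.
  by have := IXY x; rewrite !inE xX xP => /(_ isT) ->.
move=> y yY; have yNP := disjointFl PQ (subsetP sYQ y yY).
by have := IXY y; rewrite inE [y \in I]inE yY orbT yNP => /(_ isT) /exists_inP.
Qed.

Lemma component_lift_down P Q R X Y y0 :
  [disjoint Q & P] -> {in Q, forall q, exists2 r, r \in R & (r < q)%O} ->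
  component_of Q P X Y -> y0 \in Y ->
  let C := bip_component R P y0 in
  Y \subset C :&: P /\ {in X, forall x, exists2 r, r \in C :&: R & (r < x)%O}.
Proof.
move=> QP QR cXY y0Y C; have [sXQ sYP] := component_sub cXY.
pose I := [pred u | if u \in P then u \in C else [exists r in C :&: R, (r < u)%O]].
have IXY u : u \in X :|: Y -> u \in I.
  have [v _ XYv] := componentE cXY.
  have y0v : y0 \in bip_component Q P v by rewrite -XYv inE y0Y orbT.
  rewrite XYv -(bip_component_eq y0v) [u \in _]inE => y0u.
  apply: (connect_bip_inv _ y0u); last by rewrite inE (subsetP sYP) // inE connect0.
  move=> a b /orP [/and3P [aQ bP ab]|/and3P [bQ aP ba]]; rewrite !inE.
  - rewrite bP (disjointFr QP aQ) => /exists_inP [r /setIP [y0r rR] ra].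
    move: y0r; rewrite inE => y0r; apply: connect_trans y0r (connect1 _).
    by rewrite /bip_adj rR bP (lt_trans ra ab).
  - rewrite aP (disjointFr QP bQ) => y0a; have [r rR rb] := QR b bQ.
    apply/exists_inP; exists r => //; rewrite !inE rR andbT.
    by apply: connect_trans y0a (connect1 _); rewrite /bip_adj aP rR (lt_trans rb ba) orbT.
split.
  apply/subsetP => y yY; have yP := subsetP sYP y yY.
  by have := IXY y; rewrite !inE yY orbT yP => /(_ isT) ->.
move=> x xX; have xNP := disjointFr QP (subsetP sXQ x xX).
by have := IXY x; rewrite inE [x \in I]inE xX xNP => /(_ isT) /exists_inP.
Qed.

Lemma Int_proper_up X Y X' Y' x y : antichain Y -> X \subset X' ->
  {in Y, forall y, exists2 y', y' \in Y' & (y < y')%O} ->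
  x \in X -> y \in Y -> (x <= y)%O -> Int (X, Y) \proper Int (X', Y').
Proof.
move=> antiY sXX' YY' xX yY xy; have [y' y'Y' yy'] := YY' y yY.
apply/properP; split.
  apply/subsetP => z /setIP [/upP [a aX az] /downP [b bY zb]].
  have [b' b'Y' bb'] := YY' b bY; apply/setIP; split.
    by apply/upP; exists a; rewrite ?(subsetP sXX').
  by apply/downP; exists b'; rewrite ?(le_trans zb (ltW bb')).
exists y'.
  apply/setIP; split; last by apply/downP; exists y'.
  by apply/upP; exists x; rewrite ?(subsetP sXX') ?(le_trans xy (ltW yy')).
apply/negP => /setIP [_ /downP [b bY y'b]].
have yb : y = b by apply: (antichainP _ antiY) => //; exact: le_trans (ltW yy') y'b.
by subst b; move: (lt_le_trans yy' y'b); rewrite ltxx.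
Qed.

Lemma Int_proper_down X Y X' Y' x y : antichain X -> Y \subset Y' ->
  {in X, forall x, exists2 x', x' \in X' & (x' < x)%O} ->
  x \in X -> y \in Y -> (x <= y)%O -> Int (X, Y) \proper Int (X', Y').
Proof.
move=> antiX sYY' XX' xX yY xy; have [x' x'X' x'x] := XX' x xX.
apply/properP; split.
  apply/subsetP => z /setIP [/upP [a aX az] /downP [b bY zb]].
  have [a' a'X' a'a] := XX' a aX; apply/setIP; split.
    by apply/upP; exists a'; rewrite ?(le_trans (ltW a'a) az).
  by apply/downP; exists b; rewrite ?(subsetP sYY').
exists x'.
  apply/setIP; split; first by apply/upP; exists x'.
  by apply/downP; exists y; rewrite ?(subsetP sYY') ?(le_trans (ltW x'x) xy).
apply/negP => /setIP [/upP [a aX ax'] _].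
have ax : a = x by apply: (antichainP _ antiX) => //; exact: le_trans ax' (ltW x'x).
by subst a; move: (le_lt_trans ax' x'x); rewrite ltxx.
Qed.

End Components.

Section RegularPoset.
Variables (d : Order.disp_t) (T : finPOrderType d) (A : nat -> {set T}) (k : nat).
Hypotheses (RP : regular_poset A k) (w_gt0 : 0 < @width d T).
Local Notation w := (@width d T).

Definition is_level i := 1 <= i <= k.

Lemma level_maximum i : is_level i -> maximum_antichain (A i).
Proof. by case: RP => _ [+ _]; apply. Qed.

Lemma level_antichain i : is_level i -> antichain (A i).
Proof. by move/level_maximum/andP => []. Qed.

Lemma level_card i : is_level i -> #|A i| = w.
Proof. by move/level_maximum/andP => [_ /eqP]. Qed.

Lemma level_cover x : exists2 i, is_level i & x \in A i.
Proof. by case: RP => _ [_ [+ _]]; apply. Qed.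

Lemma level_disjoint i j : is_level i -> is_level j -> i != j -> [disjoint A i & A j].
Proof. by case: RP => _ [_ [_ [+ _]]]; apply. Qed.

Lemma level_total i j : is_level i -> is_level j -> sqle (A i) (A j) || sqle (A j) (A i).
Proof. by case: RP => _ [_ [_ [_ [+ _]]]]; apply. Qed.

Lemma level_bounds i : is_level i -> sqle (A 1) (A i) && sqle (A i) (A 2).
Proof. by case: RP => _ [_ [_ [_ [_ [+ _]]]]]; apply. Qed.

Lemma level_regular t p s : 2 <= t <= k -> consecutive A t p s -> regular_bip (A p) (A s).
Proof. by case: RP => _ [_ [_ [_ [_ [_ [_ +]]]]]]; apply. Qed.

Lemma level1 : is_level 1.
Proof. by case: RP => k2 _; rewrite /is_level (ltnW k2). Qed.

Lemma level2 : is_level 2.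
Proof. by case: RP => k2 _; rewrite /is_level k2. Qed.

Lemma level_uniq i j x : is_level i -> is_level j -> x \in A i -> x \in A j -> i = j.
Proof.
move=> Li Lj xi xj; apply/eqP; apply: contraLR xj => ij.
by rewrite (disjointFr (level_disjoint Li Lj ij) xi).
Qed.

Definition rank i := #|down (A i)|.

Lemma rank_inj i j : is_level i -> is_level j -> rank i = rank j -> i = j.
Proof.
wlog ij : i j / sqle (A i) (A j).
  move=> wl Li Lj eq_rank; case/orP: (level_total Li Lj) => ord; first exact: wl.
  by apply/esym/wl.
move=> Li Lj eq_rank.
have eq_down : down (A i) = down (A j).
  by apply/eqP; rewrite eqEcard sqle_down //= -/(rank j) -eq_rank.
have ji : sqle (A j) (A i) by rewrite /sqle eq_down sub_down.
have eqA := sqle_antisym (level_antichain Li) (level_antichain Lj) ij ji.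
have /set0Pn [x xi] : A i != set0 by rewrite -card_gt0 level_card.
by apply: (level_uniq Li Lj xi); rewrite -eqA.
Qed.

Lemma sqle_rankE i j : is_level i -> is_level j -> sqle (A i) (A j) = (rank i <= rank j).
Proof.
move=> Li Lj; apply/idP/idP => [/sqle_down/subset_leq_card //|].
rewrite leq_eqVlt => /predU1P [/(rank_inj Li Lj) -> |lt_ij].
  by rewrite /sqle sub_down.
case/orP: (level_total Li Lj) => // /sqle_down/subset_leq_card.
by rewrite leqNgt lt_ij.
Qed.

Lemma sqlt_rankE i j : is_level i -> is_level j -> sqlt (A i) (A j) = (rank i < rank j).
Proof.
move=> Li Lj; rewrite /sqlt sqle_rankE // ltn_neqAle andbC; congr andb.
apply/idP/idP; apply: contraNneq; first by move/(rank_inj Li Lj) ->.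
by rewrite /rank => ->.
Qed.

Lemma rank_le_of_le i j x y : is_level i -> is_level j ->
  x \in A i -> y \in A j -> (x <= y)%O -> rank i <= rank j.
Proof.
move=> Li Lj xi yj xy; rewrite -sqle_rankE //.
case/orP: (level_total Li Lj) => // /sqleP /(_ y yj) [z zi yz].
have xz : x = z by apply: (antichainP _ (level_antichain Li)) => //; exact: le_trans xy yz.
subst z; have xy_eq : x = y by apply: le_anti; rewrite xy yz.
by subst y; rewrite (level_uniq Li Lj xi yj) sqle_rankE.
Qed.

Lemma rank_lt_of_lt i j x y : is_level i -> is_level j ->
  x \in A i -> y \in A j -> (x < y)%O -> rank i < rank j.
Proof.
move=> Li Lj xi yj xy; rewrite ltn_neqAle (rank_le_of_le Li Lj xi yj (ltW xy)) andbT.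
apply/eqP => /(rank_inj Li Lj) eq_ij; subst j.
have eq_xy := antichainP _ (level_antichain Li) x y xi yj (ltW xy).
by rewrite eq_xy ltxx in xy.
Qed.

Lemma rank_lt_disjoint i j : is_level i -> is_level j -> rank i < rank j -> [disjoint A i & A j].
Proof.
move=> Li Lj lt_ij; apply: level_disjoint => //.
by apply: contraTneq lt_ij => ->; rewrite ltnn.
Qed.

Lemma rank_lt_above i j : is_level i -> is_level j -> rank i < rank j ->
  {in A i, forall x, exists2 y, y \in A j & (x < y)%O}.
Proof.
move=> Li Lj lt_ij x xi; have /sqleP/(_ x xi) [y yj xy] : sqle (A i) (A j).
  by rewrite sqle_rankE // ltnW.
exists y; rewrite // lt_neqAle xy andbT.
by apply: contraTneq yj => <-; rewrite (disjointFr (rank_lt_disjoint Li Lj lt_ij) xi).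
Qed.

Lemma rank_lt_below i j : is_level i -> is_level j -> rank i < rank j ->
  {in A j, forall y, exists2 x, x \in A i & (x < y)%O}.
Proof.
move=> Li Lj lt_ij y yj.
have /subsetP/(_ y yj)/upP [x xi xy] : A j \subset up (A i).
  by apply: maximum_sqle_sub_up; rewrite ?level_maximum ?level_antichain ?sqle_rankE // ltnW.
exists x; rewrite // lt_neqAle xy andbT.
by apply: contraTneq yj => <-; rewrite (disjointFr (rank_lt_disjoint Li Lj lt_ij) xi).
Qed.

Lemma stage_level t i : t <= k -> 1 <= i <= t -> is_level i.
Proof. by move=> tk /andP [i1 it]; rewrite /is_level i1 (leq_trans it tk). Qed.

Lemma consecutiveP t p s : t <= k -> consecutive A t p s <->
  [/\ 1 <= p <= t, 1 <= s <= t, rank p < rank s &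
      forall q, 1 <= q <= t -> ~~ (rank p < rank q < rank s)].
Proof.
move=> tk; have Lt := stage_level tk.
split => [[pt st lt gap] | [pt st lt gap]]; split => //.
- by rewrite -sqlt_rankE ?Lt.
- by move=> q qt; apply/negP => /andP [pq qs]; apply: (gap q qt); rewrite !sqlt_rankE ?Lt ?pq.
- by rewrite sqlt_rankE ?Lt.
- by move=> q qt; rewrite !sqlt_rankE ?Lt //; exact/negP/gap.
Qed.

Lemma consecutive_restrict t t' p s : consecutive A t p s -> maxn p s <= t' <= t ->
  consecutive A t' p s.
Proof.
case=> /andP [p1 _] /andP [s1 _] lt gap /andP [mt' t't]; split => //.
- by rewrite p1 (leq_trans (leq_maxl p s) mt').
- by rewrite s1 (leq_trans (leq_maxr p s) mt').
- by move=> q /andP [q1 qt']; apply: gap; rewrite q1 (leq_trans qt' t't).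
Qed.

Definition nested p' s' p s := (rank p <= rank p') && (rank s' <= rank s).

Lemma nested_antisym p s p' s' : is_level p -> is_level s -> is_level p' -> is_level s' ->
  nested p' s' p s -> nested p s p' s' -> p' = p /\ s' = s.
Proof.
move=> Lp Ls Lp' Ls' /andP [pp' s's] /andP [p'p ss'].
by split; apply: rank_inj => //; apply/anti_leq; rewrite ?pp' ?p'p ?s's ?ss'.
Qed.

Lemma consecutive_nest t p s p' s' : t <= k -> consecutive A t p' s' ->
  1 <= p <= t -> 1 <= s <= t -> rank p < rank s' -> rank p' < rank s -> nested p' s' p s.
Proof.
move=> tk /(consecutiveP p' s' tk) [_ _ _ gap] pt st ps' p's.
by move: (gap p pt) (gap s st); rewrite /nested ps' p's andbT /= -!leqNgt => -> ->.
Qed.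

Lemma consecutive_laminar t1 p1 s1 t2 p2 s2 : t1 <= k -> t2 <= k ->
  consecutive A t1 p1 s1 -> consecutive A t2 p2 s2 ->
  rank p1 < rank s2 -> rank p2 < rank s1 -> nested p1 s1 p2 s2 \/ nested p2 s2 p1 s1.
Proof.
move=> t1k t2k c1 c2 p1s2 p2s1.
have [/andP [p11 p1t1] /andP [s11 s1t1] _ _] := c1.
have [/andP [p21 p2t2] /andP [s21 s2t2] _ _] := c2.
case: (leqP t1 t2) => t12.
  by right; apply: (consecutive_nest t2k c2); rewrite ?p11 ?s11 ?(leq_trans _ t12).
by left; apply: (consecutive_nest t1k c1); rewrite ?p21 ?s21 ?(leq_trans _ (ltnW t12)).
Qed.

Lemma consecutive_insert_upper m p : 3 <= m <= k -> consecutive A m p m ->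
  exists s, consecutive A m.-1 p s /\ rank m < rank s.
Proof.
move=> /andP [m3 mk] cpm; have [/andP [p1 pm] _ lt_pm gap] := (consecutiveP p m mk).1 cpm.
have Lm : is_level m by rewrite /is_level mk (leq_trans _ m3).
have lt_p_m : p < m by rewrite ltn_neqAle pm andbT; apply: contraTneq lt_pm => ->; rewrite ltnn.
have [|s [sm /andP [s1 lt_ms] smin]] := @ex_arg_minn m (fun q => (0 < q) && (rank m < rank q)) rank.
  exists 2 => //; rewrite /= ltn_neqAle -sqle_rankE ?level2 //.
  rewrite (proj2 (andP (level_bounds Lm))) andbT.
  by apply: contraTneq m3 => /(rank_inj Lm level2) ->.
have below_m q : (q <= m.-1) = (q < m) by rewrite -ltnS (ltn_predK m3).
exists s; split => //; apply/consecutiveP; first exact: leq_trans (leq_pred m) mk.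
rewrite !below_m p1 s1 lt_p_m sm (ltn_trans lt_pm lt_ms); split => // q.
rewrite below_m => /andP [q1 qm].
have Lq : is_level q by rewrite /is_level q1 (leq_trans (ltnW qm) mk).
apply/negP => /andP [pq qs]; case: (ltngtP (rank q) (rank m)) => [q_m|m_q|/(rank_inj Lq Lm) eq_qm].
- by move: (gap q (introT andP (conj q1 (ltnW qm)))); rewrite pq q_m.
- by move: (smin q qm (introT andP (conj q1 m_q))); rewrite leqNgt qs.
- by rewrite eq_qm ltnn in qm.
Qed.

Lemma consecutive_insert_lower m s : 3 <= m <= k -> consecutive A m m s ->
  exists p, consecutive A m.-1 p s /\ rank p < rank m.
Proof.
move=> /andP [m3 mk] cms; have [_ /andP [s1 sm] lt_ms gap] := (consecutiveP m s mk).1 cms.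
have Lm : is_level m by rewrite /is_level mk (leq_trans _ m3).
have lt_s_m : s < m by rewrite ltn_neqAle sm andbT; apply: contraTneq lt_ms => ->; rewrite ltnn.
have [|p [pm /andP [p1 lt_pm] pmax]] := @ex_arg_maxn m (fun q => (0 < q) && (rank q < rank m)) rank.
  exists 1; rewrite ?(leq_trans _ m3) //= ltn_neqAle -sqle_rankE ?level1 //.
  rewrite (proj1 (andP (level_bounds Lm))) andbT.
  by apply: contraTneq m3 => /(rank_inj level1 Lm) <-.
have below_m q : (q <= m.-1) = (q < m) by rewrite -ltnS (ltn_predK m3).
exists p; split => //; apply/consecutiveP; first exact: leq_trans (leq_pred m) mk.
rewrite !below_m p1 s1 lt_s_m pm (ltn_trans lt_pm lt_ms); split => // q.
rewrite below_m => /andP [q1 qm].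
have Lq : is_level q by rewrite /is_level q1 (leq_trans (ltnW qm) mk).
apply/negP => /andP [pq qs]; case: (ltngtP (rank q) (rank m)) => [q_m|m_q|/(rank_inj Lq Lm) eq_qm].
- by move: (pmax q qm (introT andP (conj q1 q_m))); rewrite leqNgt pq.
- by move: (gap q (introT andP (conj q1 (ltnW qm)))); rewrite m_q qs.
- by rewrite eq_qm ltnn in qm.
Qed.

Lemma consecutive_levels t p s : t <= k -> consecutive A t p s -> is_level p /\ is_level s.
Proof. by move=> tk [pt st _ _]; split; apply: stage_level tk _. Qed.

(* A node of the pair (A p, A s) is recorded at the first stage, [maxn p s], at which the
   pair can be consecutive; consecutiveness persists down to that stage. *)
Definition node_at p s (N : {set T} * {set T}) : Prop :=
  [/\ maxn p s <= k, consecutive A (maxn p s) p s & component_of (A p) (A s) N.1 N.2].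

Lemma node_atI t p s N : t <= k -> consecutive A t p s ->
  component_of (A p) (A s) N.1 N.2 -> node_at p s N.
Proof.
move=> tk cps compN; have [/andP [_ pt] /andP [_ st] _ _] := cps.
have mt : maxn p s <= t by rewrite geq_max pt st.
by split; [exact: leq_trans mt tk | apply: consecutive_restrict cps _; rewrite leqnn mt|].
Qed.

Lemma is_node_at N : is_node A k N -> exists p s, node_at p s N.
Proof. by case=> t [p [s [/andP [_ tk] cps compN]]]; exists p, s; apply: node_atI cps compN. Qed.

Section NodeAt.
Variables (p s : nat) (N : {set T} * {set T}).
Hypothesis Nat : node_at p s N.

Lemma node_at_levels : [/\ is_level p, is_level s & rank p < rank s].
Proof.
case: Nat => mk cps _; have [Lp Ls] := consecutive_levels mk cps.
by have [_ _ lt _] := (consecutiveP p s mk).1 cps.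
Qed.

Lemma node_at_stage : 2 <= maxn p s.
Proof.
have [/andP [p1 _] /andP [s1 _] lt_ps] := node_at_levels.
rewrite leq_max; case: (ltngtP p s) => [ps|sp|eq_ps]; last by rewrite eq_ps ltnn in lt_ps.
  by rewrite (leq_ltn_trans p1 ps) orbT.
by rewrite (leq_ltn_trans s1 sp).
Qed.

Lemma node_at_regular : regular_bip (A p) (A s).
Proof. by case: Nat => mk cps _; apply: (level_regular _ cps); rewrite node_at_stage. Qed.

Lemma node_at_component : component_of (A p) (A s) N.1 N.2.
Proof. by case: Nat. Qed.

Lemma node_at_sub : N.1 \subset A p /\ N.2 \subset A s.
Proof. exact: component_sub node_at_component. Qed.

Lemma node_at_edge : exists x y, [/\ x \in N.1, y \in N.2 & (x < y)%O].
Proof.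
have [Lp Ls lt_ps] := node_at_levels.
apply: (component_has_edge (rank_lt_disjoint Lp Ls lt_ps) node_at_component).
  exact: rank_lt_above.
exact: rank_lt_below.
Qed.

End NodeAt.

Lemma node_parent_upper p m M : node_at p m M -> p < m -> 3 <= m ->
  exists s N, [/\ consecutive A m.-1 p s, component_of (A p) (A s) N.1 N.2, child A k M N,
                  rank m < rank s & {in M.2, forall y, exists2 y', y' \in N.2 & (y < y')%O}].
Proof.
move=> Mat pm m3; have [Lp Lm lt_pm] := node_at_levels Mat.
have [x1 [y1 [x1M y1M x1y1]]] := node_at_edge Mat.
case: Mat; rewrite (maxn_idPr (ltnW pm)) => mk cpm compM.
have [s [cps lt_ms]] := consecutive_insert_upper (introT andP (conj m3 mk)) cpm.
have [_ Ls] := consecutive_levels (leq_trans (leq_pred m) mk) cps.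
have [liftX liftY] := component_lift_up (R := A s)
  (rank_lt_disjoint Lp Lm lt_pm) (rank_lt_above Lm Ls lt_ms) compM x1M.
have [sM1 sM2] := component_sub compM.
have compN := @component_of_bip_component _ _ (A p) (A s) x1.
rewrite inE (subsetP sM1 x1 x1M) in compN; move/(_ isT) in compN.
exists s, (bip_component (A p) (A s) x1 :&: A p, bip_component (A p) (A s) x1 :&: A s).
split => //; exists m, p, s; split; rewrite ?m3 ?sqlt_rankE ?lt_pm //; split => //; first by left.
apply: Int_proper_up liftX liftY x1M y1M (ltW x1y1).
exact: antichainS sM2 (level_antichain Lm).
Qed.

Lemma node_parent_lower m s M : node_at m s M -> s < m -> 3 <= m ->
  exists p N, [/\ consecutive A m.-1 p s, component_of (A p) (A s) N.1 N.2, child A k M N,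
                  rank p < rank m & M.2 \subset N.2].
Proof.
move=> Mat sm m3; have [Lm Ls lt_ms] := node_at_levels Mat.
have [x1 [y1 [x1M y1M x1y1]]] := node_at_edge Mat.
case: Mat; rewrite (maxn_idPl (ltnW sm)) => mk cms compM.
have [p [cps lt_pm]] := consecutive_insert_lower (introT andP (conj m3 mk)) cms.
have [Lp _] := consecutive_levels (leq_trans (leq_pred m) mk) cps.
have [liftY liftX] := component_lift_down (R := A p)
  (rank_lt_disjoint Lm Ls lt_ms) (rank_lt_below Lp Lm lt_pm) compM y1M.
have compN := @component_of_bip_component _ _ (A p) (A s) y1.
have [sM1 sM2] := component_sub compM.
rewrite inE (subsetP sM2 y1 y1M) orbT in compN; move/(_ isT) in compN.
exists p, (bip_component (A p) (A s) y1 :&: A p, bip_component (A p) (A s) y1 :&: A s).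
split => //.
exists m, p, s; split; rewrite ?m3 ?sqlt_rankE ?lt_pm //; split => //; first by right.
apply: Int_proper_down liftY liftX x1M y1M (ltW x1y1).
exact: antichainS sM1 (level_antichain Lm).
Qed.

Lemma node_parent p s M : node_at p s M -> 3 <= maxn p s ->
  exists p2 s2 N, [/\ consecutive A (maxn p s).-1 p2 s2, component_of (A p2) (A s2) N.1 N.2,
    child A k M N, nested p s p2 s2 & {in M.2, forall y, exists2 y', y' \in N.2 & (y <= y')%O}].
Proof.
move=> Mat m3; have [_ _ lt_ps] := node_at_levels Mat.
case: (ltngtP p s) => [ps|sp|eq_ps]; last by rewrite eq_ps ltnn in lt_ps.
  rewrite (maxn_idPr (ltnW ps)) in m3 *.
  have [s2 [N [cps2 compN MN lt_ss2 liftY]]] := node_parent_upper Mat ps m3.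
  exists p, s2, N; split; rewrite /nested ?leqnn ?(ltnW lt_ss2) //.
  by move=> y /liftY [y' y'N /ltW]; exists y'.
rewrite (maxn_idPl (ltnW sp)) in m3 *.
have [p2 [N [cps2 compN MN lt_p2p sMN]]] := node_parent_lower Mat sp m3.
exists p2, s, N; split; rewrite /nested ?leqnn ?(ltnW lt_p2p) //.
by move=> y yM; exists y; rewrite ?(subsetP sMN).
Qed.

Lemma nested_stage_lt p s N p' s' M : node_at p s N -> node_at p' s' M ->
  nested p' s' p s -> (p', s') != (p, s) -> maxn p s < maxn p' s'.
Proof.
move=> Nat Mat /[dup] nest /andP [pp' s's] neq; rewrite ltnNge; apply: contraNN neq => le_stage.
have [Lp Ls _] := node_at_levels Nat; case: Nat => mk cN _.
have [/[dup] Lp' /andP [p'1 _] /[dup] Ls' /andP [s'1 _] lt_p's'] := node_at_levels Mat.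
have nest' : nested p s p' s'.
  apply: (consecutive_nest mk cN); rewrite ?p'1 ?s'1 ?(leq_trans _ le_stage) ?leq_maxl ?leq_maxr //.
    exact: leq_trans lt_p's' s's.
  exact: leq_ltn_trans pp' lt_p's'.
by have [-> ->] := nested_antisym Lp Ls Lp' Ls' nest nest'.
Qed.

(* Climb from M to its parents: the stage decreases, and the parent pair stays nested in
   (p, s) until it equals (p, s), where the parent is N itself. *)
Lemma nested_node_descendant p s N p' s' M x y :
  node_at p s N -> node_at p' s' M -> nested p' s' p s -> (p', s') != (p, s) ->
  x \in N.1 -> y \in M.2 -> (x < y)%O -> descendant A k M N.
Proof.
move=> Nat; have [Lp Ls lt_ps] := node_at_levels Nat; have compN := node_at_component Nat.
have [n] := ubnP (maxn p' s'); elim: n => // n IH in p' s' M y *.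
rewrite ltnS => le_n Mat /[dup] nest /andP [pp' s's] neq xN yM xy.
have [_ _ lt_p's'] := node_at_levels Mat; have lt_stage := nested_stage_lt Nat Mat nest neq.
have [p2 [s2 [N2 [cN2 compN2 MN2 /andP [p2p' s's2] liftY]]]] :=
  node_parent Mat (leq_ltn_trans (node_at_stage Nat) lt_stage).
have [y2 y2N2 yy2] := liftY y yM; have xy2 := lt_le_trans xy yy2.
have m1k : (maxn p' s').-1 <= k by case: Mat => mk' _ _; exact: leq_trans (leq_pred _) mk'.
have m1n : (maxn p' s').-1 < n.
  by rewrite (leq_trans _ le_n) // ltn_predL (leq_ltn_trans _ lt_stage).
have in_stage q : is_level q -> q <= maxn p s -> 1 <= q <= (maxn p' s').-1.
  by case/andP => q1 _ qm; rewrite q1 -ltnS (ltn_predK lt_stage) (leq_ltn_trans qm lt_stage).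
have /andP [pp2 s2s] : nested p2 s2 p s.
  apply: (consecutive_nest m1k cN2); rewrite ?in_stage ?leq_maxl ?leq_maxr //.
    exact: leq_ltn_trans pp' (leq_trans lt_p's' s's2).
  exact: leq_ltn_trans p2p' (leq_trans lt_p's' s's).
have PQ := rank_lt_disjoint Lp Ls lt_ps.
case: (eqVneq (p2, s2) (p, s)) => [/eqP | neq2].
  rewrite xpair_eqE => /andP [/eqP eq_p /eqP eq_s]; subst p2 s2.
  have y2N : y2 \in N.2.
    by apply: (component_up PQ compN xN _ xy2); apply: (subsetP (proj2 (component_sub compN2))).
  have := component_eq PQ compN2 compN (z := y2); rewrite !inE y2N2 y2N !orbT -!surjective_pairing.
  by move=> /(_ isT isT) <-; apply: desc_child.
have [/andP [_ p2m] /andP [_ s2m] _ _] := cN2.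
apply: desc_step MN2 (IH p2 s2 N2 y2 _ (node_atI m1k cN2 compN2) _ neq2 xN y2N2 xy2).
  by rewrite gtn_max (leq_ltn_trans p2m m1n) (leq_ltn_trans s2m m1n).
by rewrite /nested pp2 s2s.
Qed.

Section EdgeAntichain.
Variables (F : {set {set T} * {set T}}) (S : {set T * T}).
Hypotheses (F_nodes : forall N, N \in F -> is_node A k N) (F_free : ancestor_free A k F).
Hypothesis S_anti : edge_antichain F S.

Lemma edge_node e : e \in S ->
  exists p s N, [/\ N \in F, node_at p s N, e.1 \in N.1, e.2 \in N.2 & (e.1 < e.2)%O].
Proof.
case: S_anti => sSE _ /(subsetP sSE); rewrite inE => /exists_inP [N NF /and3P [e1N e2N lte]].
by have [p [s Nat]] := is_node_at (F_nodes NF); exists p, s, N.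
Qed.

Lemma ancestor_free_nested p s N p' s' M x y : N \in F -> M \in F ->
  node_at p s N -> node_at p' s' M -> nested p' s' p s ->
  x \in N.1 -> y \in M.2 -> (x < y)%O -> (p', s') = (p, s).
Proof.
move=> NF MF Nat Mat nest xN yM xy; apply/eqP; apply: contraT => neq.
by case: (F_free MF NF); apply: nested_node_descendant Nat Mat nest neq xN yM xy.
Qed.

Lemma edge_fiber_level e f s : e \in S -> f \in S -> e.1 = f.1 ->
  is_level s -> e.2 \in A s -> f.2 \in A s.
Proof.
move=> eS fS ef Ls e2s.
have [p [s0 [N [NF Nat e1N e2N lte]]]] := edge_node eS.
have [pf [sf [Nf [NfF Nfat f1N f2N ltf]]]] := edge_node fS.
have [Lp Ls0 _] := node_at_levels Nat; have [Lpf _ _] := node_at_levels Nfat.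
have [sN1 sN2] := node_at_sub Nat; have [sNf1 sNf2] := node_at_sub Nfat.
have eq_p : pf = p by apply: (level_uniq Lpf Lp (subsetP sNf1 _ f1N)); rewrite -ef (subsetP sN1).
have eq_s : s0 = s := level_uniq Ls0 Ls (subsetP sN2 _ e2N) e2s.
subst pf s0; suff <- : sf = s by apply: (subsetP sNf2).
case: (leqP (rank sf) (rank s)) => [le_fs | /ltnW le_sf].
  have nest : nested p sf p s by rewrite /nested leqnn.
  have lt_ef : (e.1 < f.2)%O by rewrite ef.
  by case: (ancestor_free_nested NF NfF Nat Nfat nest e1N f2N lt_ef).
have nest : nested p s p sf by rewrite /nested leqnn.
have lt_fe : (f.1 < e.2)%O by rewrite -ef.
by case: (ancestor_free_nested NfF NF Nfat Nat nest f1N e2N lt_fe).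
Qed.

Lemma edge_fiber_card a : #|[set e in S | e.1 == a]| <= w.
Proof.
have [->|[e0]] := set_0Vmem [set e in S | e.1 == a]; first by rewrite cards0.
rewrite inE => /andP [e0S /eqP e0a].
have [p [s [N [_ Nat _ e2N _]]]] := edge_node e0S.
have [_ Ls _] := node_at_levels Nat; have e0s := subsetP (proj2 (node_at_sub Nat)) _ e2N.
rewrite -(level_card Ls) -(@card_in_imset _ _ snd).
  apply/subset_leq_card/subsetP => _ /imsetP [f /setIdP [fS /eqP fa] ->].
  by apply: (edge_fiber_level e0S fS) => //; rewrite fa e0a.
by move=> [e1 e2] [f1 f2] /setIdP [_ /eqP /= ->] /setIdP [_ /eqP /= ->] /= ->.
Qed.

(* Otherwise the node of f would be nested in the node of e. *)
Lemma rank_le_of_lt_lower_ends e f p s : e \in S -> f \in S -> (e.1 < f.1)%O ->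
  is_level p -> is_level s -> e.2 \in A s -> f.1 \in A p -> rank s <= rank p.
Proof.
move=> eS fS ef Lp Ls e2s f1p; rewrite leqNgt; apply/negP => lt_ps.
have [p' [s' [N' [N'F N'at e1N' e2N' _]]]] := edge_node eS.
have [pf [sf [Nf [NfF Nfat f1Nf f2Nf ltf]]]] := edge_node fS.
have [Lp' Ls' lt_p's'] := node_at_levels N'at; have [Lpf _ lt_pfsf] := node_at_levels Nfat.
have [sN'1 sN'2] := node_at_sub N'at; have [sNf1 _] := node_at_sub Nfat.
have eq_s : s' = s := level_uniq Ls' Ls (subsetP sN'2 _ e2N') e2s.
have eq_p : pf = p := level_uniq Lpf Lp (subsetP sNf1 _ f1Nf) f1p.
subst s' pf; have lt_p'p := rank_lt_of_lt Lp' Lp (subsetP sN'1 _ e1N') f1p ef.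
case: (N'at) (Nfat) => [m'k c' _] [mfk cf _].
case: (consecutive_laminar m'k mfk c' cf) => [|| /andP [le_pp' _] | nest].
- exact: ltn_trans lt_p'p lt_pfsf.
- exact: lt_ps.
- by rewrite leqNgt lt_p'p in le_pp'.
have [eq_p _] := ancestor_free_nested N'F NfF N'at Nfat nest e1N' f2Nf (lt_trans ef ltf).
by rewrite eq_p ltnn in lt_p'p.
Qed.

Definition lower_ends : {set T} := [set e.1 | e in S].

(* Junk value [x] when no edge of [S] starts at [x]. *)
Definition mate x : T := (odflt (x, x) [pick e in S | e.1 == x]).2.

Lemma mate_edge x : x \in lower_ends -> (x, mate x) \in S.
Proof.
case/imsetP => e eS ->; rewrite /mate; case: pickP => [f /andP [fS /eqP <-] | /(_ e)].
  by rewrite -surjective_pairing.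
by rewrite eS eqxx.
Qed.

Lemma lower_end_notin_up_mates c (X : {set T}) :
  c \in lower_ends -> X \subset lower_ends -> c \notin X -> c \notin up (mate @: X).
Proof.
move=> cS XS cX; apply/negP => /upP [_ /imsetP [x xX ->] xc].
have [_ anti] := S_anti.
have xc_ne : (x, mate x) != (c, mate c).
  by apply/negP => /eqP [eq_xc _]; move: cX; rewrite -eq_xc xX.
by move: (anti _ _ (mate_edge (subsetP XS x xX)) (mate_edge cS) xc_ne); rewrite /= xc.
Qed.

(* Induction removing the top c.  A perfect matching through the edge (c', mate c') at the
   new top maps the inductive count plus c' injectively into the up-set of mates on the level
   of mate c'; that level lies below the level of c, and [leq_card_up_maximum] transports the
   count there. *)
Lemma card_chain_le_up_mates (C : {set T}) c p : C \subset lower_ends -> chain C ->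
  c \in C -> {in C, forall x, (x <= c)%O} -> is_level p -> c \in A p ->
  #|C :\ c| <= #|up (mate @: (C :\ c)) :&: A p|.
Proof.
have [n] := ubnP #|C|; elim: n => // n IH in C c p *.
rewrite ltnS => le_n sCS chC cC cmax Lp cp; set C' := C :\ c.
have [->|nC'] := eqVneq C' set0; first by rewrite cards0.
have [c' c'C' c'max] := chain_max (chainS (subsetDl C [set c]) chC) nC'.
have /setD1P [c'c c'C] := c'C'.
have lt_c'c : (c' < c)%O by rewrite lt_neqAle c'c cmax.
have c'S := subsetP sCS c' c'C.
have [p' [s' [N' [_ N'at /= c'N' mc'N' lt_c'm]]]] := edge_node (mate_edge c'S).
have [Lp' Ls' _] := node_at_levels N'at; have [sN'1 sN'2] := node_at_sub N'at.
have c'p' := subsetP sN'1 _ c'N'; have ms' := subsetP sN'2 _ mc'N'.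
have sC'S : C' \subset lower_ends := subset_trans (subsetDl _ _) sCS.
set Q := up (mate @: (C' :\ c')) :&: A p'.
have le_Q : #|C' :\ c'| <= #|Q|.
  apply: IH => //; last exact: chainS (subsetDl _ _) chC.
  by rewrite (leq_trans _ le_n) // [#|C|](cardsD1 c) cC.
set Tg := up (mate @: C') :&: A s'.
have [M /andP [pmM c'mM]] := node_at_regular N'at c'p' ms' lt_c'm.
have lt_QT : #|Q| < #|Tg|.
  apply: (perfect_matching_card_lt pmM (subsetIr _ _) c'mM).
  - rewrite inE negb_and lower_end_notin_up_mates ?setD11 //.
    exact: subset_trans (subsetDl _ _) sC'S.
  - by rewrite inE ms' andbT; apply/upP; exists (mate c') => //; apply/imsetP; exists c'.
  - move=> q y /setIP [/upP [b bC'c' bq] _] ys' qy; rewrite inE ys' andbT.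
    apply/upP; exists b; last exact: le_trans bq (ltW qy).
    by move: bC'c'; apply/subsetP/imsetS/subsetDl.
have le_s'p := rank_le_of_lt_lower_ends (mate_edge c'S) (mate_edge (subsetP sCS c cC))
  lt_c'c Lp Ls' ms' cp.
have le_Tg : #|Tg| <= #|up Tg :&: A p|.
  by apply: leq_card_up_maximum (subsetIr _ _); rewrite ?level_antichain ?level_maximum ?sqle_rankE.
have sub_Tg : up Tg :&: A p \subset up (mate @: C') :&: A p.
  by rewrite setSI // -(up_up (mate @: C')) up_subset // subsetIl.
rewrite (cardsD1 c' C') c'C' add1n.
exact: leq_ltn_trans le_Q (leq_trans lt_QT (leq_trans le_Tg (subset_leq_card sub_Tg))).
Qed.

Lemma chain_lower_ends_leq_width (C : {set T}) : C \subset lower_ends -> chain C -> #|C| <= w.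
Proof.
move=> sCS chC; have [->|nC] := eqVneq C set0; first by rewrite cards0.
have [c cC cmax] := chain_max chC nC; have [p Lp cp] := level_cover c.
have sub : up (mate @: (C :\ c)) :&: A p \subset A p :\ c.
  apply/subsetP => z /setIP [zu zp]; rewrite !inE zp andbT; apply: contraTneq zu => ->.
  by rewrite lower_end_notin_up_mates ?(subsetP sCS) ?setD11 // (subset_trans (subsetDl _ _) sCS).
rewrite (cardsD1 c C) cC -(level_card Lp) (cardsD1 c (A p)) cp !add1n ltnS.
exact: leq_trans (card_chain_le_up_mates sCS chC cC cmax Lp cp) (subset_leq_card sub).
Qed.

Lemma edge_antichain_card : #|S| <= w ^ 3.
Proof.
apply: leq_trans (leq_card_fibers (f := fun e : T * T => e.1) edge_fiber_card) _.
have le_ends : #|lower_ends| <= w * w.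
  by apply: leq_card_chain_width => C; apply: chain_lower_ends_leq_width.
by rewrite !expnS expn0 muln1 mulnA leq_mul2r le_ends orbT.
Qed.

End EdgeAntichain.

End RegularPoset.

Theorem lemma12 (d : Order.disp_t) (T : finPOrderType d)
    (A : nat -> {set T}) (k : nat) :
  regular_poset A k ->
  forall F : {set {set T} * {set T}},
    (forall N, N \in F -> is_node A k N) ->
    ancestor_free A k F ->
    forall S : {set T * T}, edge_antichain F S ->
      (#|S| <= (@width d T) ^ 3)%N.
Proof.
move=> RP F F_nodes F_free S S_anti.
have [->|[e _]] := set_0Vmem S; first by rewrite cards0.
exact: (edge_antichain_card RP (width_gt0 e.1) F_nodes F_free S_anti).
Qed.
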